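(* Let $J:\mathbb{R}^N\to\mathbb{R}$ be a finite-valued convex function, let $\Phi:\mathbb{R}^N\to\mathbb{R}^P$ be linear, let $x_0\in\mathbb{R}^N$, and write $T=T_{x_0}=\mathrm{Lin}(\partial J(x_0))^\perp$. Assume $\ker(\Phi)\cap T=\{0\}$. Define the linearized pre-certificate $$\eta_F=\Phi^*\,\operatorname*{argmin}\{\|p\| \;:\; p\in\mathbb{R}^P,\ \Phi^*p\in\mathrm{aff}(\partial J(x_0))\}.$$ Then $$\eta_F=\Phi^*\,(\Phi_T^{+})^{*}\, e_{x_0},\qquad\text{where } e_{x_0}=\mathrm{P}_T(\partial J(x_0))\in\mathbb{R}^N.$$
   Context: $\partial J(x)$ denotes the convex subdifferential of $J$ at $x$. For a convex set $E$, $\mathrm{aff}(E)$ is its affine hull and $\mathrm{Lin}(E)$ the linear subspace parallel to $\mathrm{aff}(E)$. For a subspace $T$, $\mathrm{P}_T$ is the orthogonal projection onto $T$ and $\Phi_T=\Phi\,\mathrm{P}_T$. For a matrix $A$, $A^*$ is its transpose and $A^+$ its Moore–Penrose pseudo-inverse. Since $\mathrm{aff}(\partial J(x_0))$ is parallel to $T^\perp$, the image $\mathrm{P}_T(\partial J(x_0))$ consists of a single vector, denoted $e_{x_0}$. Under the assumption $\ker(\Phi)\cap T=\{0\}$, the constraint set in the definition of $\eta_F$ is a non-empty affine space, so the minimal-norm $p$ is unique and $\eta_F$ is well defined. *)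

From Stdlib Require Import ClassicalEpsilon.
From mathcomp Require Import all_boot all_order all_algebra.
From mathcomp Require Import reals.
Set Implicit Arguments. Unset Strict Implicit. Unset Printing Implicit Defensive.
Import Order.TTheory GRing.Theory Num.Theory.
Local Open Scope ring_scope.

Section Defs.
Variable R : realType.

Definition dotv n (u v : 'cV[R]_n) : R := (u^T *m v) 0 0.
Definition enorm n (u : 'cV[R]_n) : R := Num.sqrt (dotv u u).

Definition convex_fun n (J : 'cV[R]_n -> R) : Prop :=
  forall (x y : 'cV[R]_n) (t : R), 0 <= t -> t <= 1 ->
    J (t *: x + (1 - t) *: y) <= t * J x + (1 - t) * J y.

Definition subdiff n (J : 'cV[R]_n -> R) (x : 'cV[R]_n) : 'cV[R]_n -> Prop :=
  fun g => forall y, J x + dotv g (y - x) <= J y.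

Definition aff n (E : 'cV[R]_n -> Prop) : 'cV[R]_n -> Prop :=
  fun v => exists (k : nat) (s : 'I_k -> 'cV[R]_n) (l : 'I_k -> R),
    (forall i, E (s i)) /\ \sum_(i < k) l i = 1 /\ v = \sum_(i < k) l i *: s i.

Definition Lin n (E : 'cV[R]_n -> Prop) : 'cV[R]_n -> Prop :=
  fun w => exists u v, aff E u /\ aff E v /\ w = u - v.

Definition orthc n (S : 'cV[R]_n -> Prop) : 'cV[R]_n -> Prop :=
  fun t => forall w, S w -> dotv w t = 0.

Definition is_orthoproj n (T : 'cV[R]_n -> Prop) (P : 'M[R]_n) : Prop :=
  forall x, T (P *m x) /\ forall t, T t -> dotv t (x - P *m x) = 0.
Definition orthoproj n (T : 'cV[R]_n -> Prop) : 'M[R]_n :=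
  epsilon (inhabits 0) (is_orthoproj T).

Definition penrose m n (A : 'M[R]_(m, n)) (X : 'M[R]_(n, m)) : Prop :=
  [/\ A *m X *m A = A, X *m A *m X = X, (A *m X)^T = A *m X & (X *m A)^T = X *m A].
Definition mp_pinv m n (A : 'M[R]_(m, n)) : 'M[R]_(n, m) :=
  epsilon (inhabits 0) (penrose A).

Definition argmin_norm n (S : 'cV[R]_n -> Prop) : 'cV[R]_n :=
  epsilon (inhabits 0) (fun p => S p /\ forall q, S q -> enorm p <= enorm q).

Definition Tspace n (J : 'cV[R]_n -> R) (x0 : 'cV[R]_n) := orthc (Lin (subdiff J x0)).

Definition etaF p n (J : 'cV[R]_n -> R) (Phi : 'M[R]_(p, n)) (x0 : 'cV[R]_n) : 'cV[R]_n :=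
  Phi^T *m argmin_norm (fun q : 'cV[R]_p => aff (subdiff J x0) (Phi^T *m q)).

End Defs.

(* Let E be the subdifferential, g a point of E and Pr the orthogonal
   projector onto T.  A finite family of points of E whose differences with g
   span Lin(E) exhibits T as the kernel of a matrix B, so Pr = 1 - B^+ B and
   aff(E) = {v | Pr v = Pr g}.  Since Pr is symmetric, the constraint on p
   becomes (Phi Pr)^* p = Pr g, a consistent linear system because Phi is
   injective on T; the minimal-norm solution of a consistent system A p = b
   is A^+ b, here ((Phi Pr)^+)^* (Pr g). *)

From mathcomp Require Import all_boot all_order all_algebra.
From mathcomp Require Import reals.
From Stdlib Require Import Classical ClassicalEpsilon.
Set Implicit Arguments. Unset Strict Implicit. Unset Printing Implicit Defensive.
Import Order.TTheory GRing.Theory Num.Theory.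
Local Open Scope ring_scope.

Section Euclidean.
Variables (R : realType) (n : nat).
Implicit Types (u v w : 'cV[R]_n).

Lemma dotvE u v : dotv u v = \sum_i u i 0 * v i 0.
Proof. by rewrite /dotv mxE; apply: eq_bigr => i _; rewrite mxE. Qed.

Lemma dotvC u v : dotv u v = dotv v u.
Proof. by rewrite !dotvE; apply: eq_bigr => i _; rewrite mulrC. Qed.

Lemma dotvDr u v w : dotv u (v + w) = dotv u v + dotv u w.
Proof. by rewrite !dotvE -big_split; apply: eq_bigr => i _; rewrite mxE mulrDr. Qed.

Lemma dotvBr u v w : dotv u (v - w) = dotv u v - dotv u w.
Proof.
by rewrite !dotvE -sumrB; apply: eq_bigr => i _; rewrite !mxE mulrBr.
Qed.

Lemma dotv0r u : dotv u 0 = 0.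
Proof. by rewrite /dotv mulmx0 mxE. Qed.

Lemma dotv_mulmxr m (A : 'M[R]_(m, n)) (u : 'cV[R]_m) v :
  dotv u (A *m v) = dotv (A^T *m u) v.
Proof. by rewrite /dotv trmx_mul trmxK mulmxA. Qed.

Lemma dotvv_ge0 v : 0 <= dotv v v.
Proof. by rewrite dotvE; apply: sumr_ge0 => i _; rewrite -expr2 sqr_ge0. Qed.

Lemma dotvv_eq0 v : dotv v v = 0 -> v = 0.
Proof.
rewrite dotvE => /eqP; rewrite psumr_eq0 => [/allP v0|i _]; last first.
  by rewrite -expr2 sqr_ge0.
apply/matrixP => i j; rewrite ord1 mxE.
by have := v0 i (mem_index_enum i); rewrite /= -expr2 sqrf_eq0 => /eqP.
Qed.

Lemma dotv_pythagoras u w : dotv u w = 0 ->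
  dotv (u + w) (u + w) = dotv u u + dotv w w.
Proof.
move=> uw0; rewrite !dotvDr dotvC dotvDr (dotvC (u + w)) dotvDr.
by rewrite (dotvC w u) uw0 addr0 add0r.
Qed.

Lemma enorm_le u v : (enorm u <= enorm v) = (dotv u u <= dotv v v).
Proof. by rewrite /enorm ler_psqrt ?nnegrE ?dotvv_ge0. Qed.

End Euclidean.

Lemma argmin_normE (R : realType) n (S : 'cV[R]_n -> Prop) (p : 'cV[R]_n) :
  S p -> (forall q, S q -> dotv p (q - p) = 0) -> argmin_norm S = p.
Proof.
move=> Sp p_orth.
have normE q : S q -> dotv q q = dotv p p + dotv (q - p) (q - p).
  by move=> Sq; rewrite -dotv_pythagoras ?p_orth // addrC subrK.
have p_min q : S q -> enorm p <= enorm q.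
  by move=> Sq; rewrite enorm_le (normE q Sq) lerDl dotvv_ge0.
have [|Sp' p'_min] := epsilon_spec (inhabits 0)
  (fun p => S p /\ forall q, S q -> enorm p <= enorm q); first by exists p.
have := p'_min p Sp; rewrite enorm_le (normE _ Sp') gerDl => le0.
have /dotvv_eq0/subr0_eq // : dotv (argmin_norm S - p) (argmin_norm S - p) = 0.
by apply/eqP; rewrite eq_le le0 dotvv_ge0.
Qed.

Section PseudoInverse.
Variable R : realType.

Lemma row_free_gram_unit m n (A : 'M[R]_(m, n)) :
  row_free A -> A *m A^T \in unitmx.
Proof.
move=> freeA; rewrite -row_free_unit; apply: inj_row_free => x xAA0.
have xA0 : x *m A = 0.
  apply: trmx_inj; rewrite trmx0; apply: dotvv_eq0.
  by rewrite /dotv trmxK trmx_mul mulmxA -(mulmxA x) xAA0 mul0mx mxE.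
by apply/eqP; rewrite -(mulmx_free_eq0 _ freeA) xA0.
Qed.

Lemma penrose_full_rank m r n (F : 'M[R]_(m, r)) (G : 'M[R]_(r, n)) :
  F^T *m F \in unitmx -> G *m G^T \in unitmx ->
  penrose (F *m G) (G^T *m invmx (G *m G^T) *m invmx (F^T *m F) *m F^T).
Proof.
move=> unitF unitG.
set X := G^T *m _ *m _ *m _.
have FGX : F *m G *m X = F *m invmx (F^T *m F) *m F^T.
  by rewrite !mulmxA -(mulmxA F G) -(mulmxA F) mulmxV // mulmx1.
have XFG : X *m (F *m G) = G^T *m invmx (G *m G^T) *m G.
  by rewrite !mulmxA -(mulmxA _ F^T) -(mulmxA _ (invmx _)) mulVmx // mulmx1.
have invT (H : 'M[R]_r) : (invmx H)^T = invmx H^T by rewrite trmx_inv.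
split.
- by rewrite FGX !mulmxA -(mulmxA _ F^T) -(mulmxA F) mulVmx // mulmx1.
- by rewrite XFG !mulmxA -(mulmxA _ G) -(mulmxA G^T) mulVmx // mulmx1.
- by rewrite FGX !trmx_mul trmxK invT trmx_mul trmxK mulmxA.
- by rewrite XFG !trmx_mul trmxK invT trmx_mul trmxK mulmxA.
Qed.

Lemma mp_pinvP m n (A : 'M[R]_(m, n)) : penrose A (mp_pinv A).
Proof.
apply: epsilon_spec; have <- := mulmx_base A.
have freeF : row_free (col_base A)^T.
  by rewrite /row_free mxrank_tr; exact: col_base_full.
have unitF := row_free_gram_unit freeF; rewrite trmxK in unitF.
by eexists; apply: penrose_full_rank unitF (row_free_gram_unit (row_base_free A)).
Qed.

Lemma penrose_tr m n (A : 'M[R]_(m, n)) X : penrose A X -> penrose A^T X^T.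
Proof.
case=> AXA XAX AXT XAT; split; rewrite -!trmx_mul ?mulmxA.
- by rewrite AXA.
- by rewrite XAX.
- by rewrite XAT.
- by rewrite AXT.
Qed.

(* [X *m b] lies in the row space of [A] and [q - X *m b] in its kernel. *)
Lemma penrose_min_norm m n (A : 'M[R]_(m, n)) X (b : 'cV[R]_m) (q : 'cV[R]_n) :
  penrose A X -> A *m (X *m b) = b -> A *m q = b ->
  dotv (X *m b) (q - X *m b) = 0.
Proof.
case=> _ XAX _ XAT AXb Aq.
have XE : X = A^T *m X^T *m X by rewrite -trmx_mul XAT XAX.
by rewrite {1}XE -!mulmxA -dotv_mulmxr mulmxBr AXb Aq subrr dotv0r.
Qed.

End PseudoInverse.

Section KernelProjector.
Variables (R : realType) (k n : nat) (B : 'M[R]_(k, n)).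

Definition kerproj : 'M[R]_n := 1%:M - mp_pinv B *m B.

Lemma kerprojT : kerproj^T = kerproj.
Proof. by have [_ _ _ XBT] := mp_pinvP B; rewrite /kerproj linearB /= trmx1 XBT. Qed.

Lemma mulmx_kerproj : B *m kerproj = 0.
Proof.
have [BXB _ _ _] := mp_pinvP B.
by rewrite /kerproj mulmxBr mulmx1 mulmxA BXB subrr.
Qed.

Lemma kerproj_id m (C : 'M[R]_(n, m)) : B *m C = 0 -> kerproj *m C = C.
Proof. by move=> BC0; rewrite /kerproj mulmxBl mul1mx -mulmxA BC0 mulmx0 subr0. Qed.

Lemma kerproj_idem : kerproj *m kerproj = kerproj.
Proof. exact: kerproj_id mulmx_kerproj. Qed.

Lemma kerproj_eq0 (v : 'cV[R]_n) : kerproj *m v = 0 <-> (v^T <= B)%MS.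
Proof.
have [_ _ _ XBT] := mp_pinvP B; split.
  rewrite /kerproj mulmxBl mul1mx => /eqP; rewrite subr_eq0 => /eqP ->.
  by rewrite trmx_mul XBT mulmxA submxMl.
case/submxP=> y vE; apply: trmx_inj.
by rewrite trmx_mul kerprojT vE -mulmxA mulmx_kerproj mulmx0 trmx0.
Qed.

Lemma is_orthoproj_kerproj (T : 'cV[R]_n -> Prop) :
  (forall t, T t <-> B *m t = 0) -> is_orthoproj T kerproj.
Proof.
move=> TE x; split; first by apply/TE; rewrite mulmxA mulmx_kerproj mul0mx.
move=> t /TE/kerproj_id <-; rewrite -{1}kerprojT -dotv_mulmxr.
by rewrite mulmxBr mulmxA kerproj_idem subrr dotv0r.
Qed.

End KernelProjector.

Lemma orthoproj_uniq (R : realType) n (T : 'cV[R]_n -> Prop) (P1 P2 : 'M[R]_n) :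
  (forall a b, T a -> T b -> T (a - b)) ->
  is_orthoproj T P1 -> is_orthoproj T P2 -> P1 = P2.
Proof.
move=> subT P1T P2T; apply: trmx_inj; apply/row_matrixP => j.
rewrite -!tr_col !colE; congr (_^T).
set x := delta_mx j 0; have [T1 orth1] := P1T x; have [T2 orth2] := P2T x.
apply/subr0_eq/dotvv_eq0.
have {2}-> : P1 *m x - P2 *m x = (x - P2 *m x) - (x - P1 *m x).
  by rewrite [RHS]addrC opprB addrA subrK.
have Td : T (P1 *m x - P2 *m x) by exact: subT.
by rewrite dotvBr orth1 // orth2 // subrr.
Qed.

Lemma orthoproj_kerproj (R : realType) k n (B : 'M[R]_(k, n)) (T : 'cV[R]_n -> Prop) :
  (forall t, T t <-> B *m t = 0) -> orthoproj T = kerproj B.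
Proof.
move=> TE; have kerT := is_orthoproj_kerproj TE.
have orthoT : is_orthoproj T (orthoproj T) := epsilon_spec _ _ (ex_intro _ _ kerT).
apply: orthoproj_uniq orthoT kerT.
by move=> a b /TE Ba /TE Bb; apply/TE; rewrite mulmxBr Ba Bb subrr.
Qed.

Section AffineHull.
Variables (R : realType) (n : nat) (E : 'cV[R]_n -> Prop) (g : 'cV[R]_n).

Definition diffmx k (s : 'I_k -> 'cV[R]_n) : 'M[R]_(k, n) := \matrix_i (s i - g)^T.

Definition spanning_diffs k (s : 'I_k -> 'cV[R]_n) :=
  (forall i, E (s i)) /\ forall y, E y -> ((y - g)^T <= diffmx s)%MS.

Lemma diffmx_full_or_spanning m :
  (exists s : 'I_m -> 'cV[R]_n, (forall i, E (s i)) /\ \rank (diffmx s) = m) \/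
  exists k (s : 'I_k -> 'cV[R]_n), spanning_diffs s.
Proof.
elim: m => [|m [[s [Es rank_s]]|]]; last by right.
  left; exists (fun=> 0); split; first by case.
  by apply/eqP; rewrite -leqn0 rank_leq_row.
have [spans|not_spans] := classic (forall y, E y -> ((y - g)^T <= diffmx s)%MS).
  by right; exists m, s.
have [y not_y] := not_all_ex_not _ _ not_spans.
have [Ey y_out] := imply_to_and _ _ not_y; left.
pose s' (i : 'I_m.+1) := if unlift ord_max i is Some j then s j else y.
have s'_max : row ord_max (diffmx s') = (y - g)^T.
  by rewrite rowK /s' unlift_none.
have ltss' : (diffmx s < diffmx s')%MS.
  rewrite ltmxE; apply/andP; split.
    apply/row_subP => i; rewrite rowK.
    have -> : (s i - g)^T = row (lift ord_max i) (diffmx s').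
      by rewrite rowK /s' liftK.
    exact: row_sub.
  apply/negP => s's; apply: y_out; rewrite -s'_max.
  exact: submx_trans (row_sub _ _) s's.
exists s'; split; first by move=> i; rewrite /s'; case: (unlift ord_max i).
have := rank_ltmx ltss'; rewrite rank_s => ltm.
by apply/eqP; rewrite eqn_leq ltm rank_leq_row.
Qed.

Lemma exists_spanning_diffs : exists k (s : 'I_k -> 'cV[R]_n), spanning_diffs s.
Proof.
have [[s [_ rank_s]]|//] := diffmx_full_or_spanning n.+1.
by have := rank_leq_col (diffmx s); rewrite rank_s ltnn.
Qed.

Lemma aff_singleton x : E x -> aff E x.
Proof.
move=> Ex; exists 1%N, (fun=> x), (fun=> 1); split=> //.
by rewrite !big_ord1 scale1r.
Qed.

Lemma aff_sub_diffmx k (s : 'I_k -> 'cV[R]_n) v :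
  spanning_diffs s -> aff E v -> ((v - g)^T <= diffmx s)%MS.
Proof.
move=> [_ spans] [m [t [l [Et [l1 ->]]]]].
have -> : \sum_(i < m) l i *: t i - g = \sum_(i < m) l i *: (t i - g).
  by rewrite (eq_bigr _ (fun i _ => scalerBr _ _ _)) sumrB -scaler_suml l1 scale1r.
rewrite linear_sum; apply: summx_sub => i _; rewrite linearZ /=.
exact/scalemx_sub/spans.
Qed.

Hypothesis Eg : E g.

(* The affine combination uses the points [s i] and [g], the latter with
   weight [1 - \sum_i y i]. *)
Lemma sub_diffmx_aff k (s : 'I_k -> 'cV[R]_n) v :
  (forall i, E (s i)) -> ((v - g)^T <= diffmx s)%MS -> aff E v.
Proof.
move=> Es /submxP[y vgE].
have vE : v = g + \sum_(i < k) y 0 i *: (s i - g).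
  rewrite -[LHS](subrK g) addrC; congr (_ + _); apply: trmx_inj.
  rewrite vgE mulmx_sum_row linear_sum; apply: eq_bigr => i _.
  by rewrite linearZ /= rowK.
pose t (i : 'I_k.+1) := if unlift ord_max i is Some j then s j else g.
pose l (i : 'I_k.+1) :=
  if unlift ord_max i is Some j then y 0 j else 1 - \sum_(j < k) y 0 j.
have unlift_widen j : unlift ord_max (widen_ord (leqnSn k) j) = Some j.
  have -> : widen_ord (leqnSn k) j = lift ord_max j by apply: ord_inj; rewrite lift_max.
  by rewrite liftK.
have l1 : \sum_(i < k.+1) l i = 1.
  rewrite big_ord_recr /l unlift_none /=.
  by under eq_bigr do rewrite unlift_widen; rewrite addrC subrK.
have ltE : \sum_(i < k.+1) l i *: t i =
    \sum_(j < k) y 0 j *: s j + (1 - \sum_(j < k) y 0 j) *: g.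
  rewrite big_ord_recr /l /t unlift_none /=.
  by under eq_bigr do rewrite unlift_widen.
exists k.+1, t, l; split; first by move=> i; rewrite /t; case: unlift.
split=> //; rewrite ltE vE (eq_bigr _ (fun i _ => scalerBr _ _ _)) sumrB.
by rewrite -scaler_suml scalerBl scale1r addrCA.
Qed.

Lemma orthc_Lin_diffmx k (s : 'I_k -> 'cV[R]_n) t :
  spanning_diffs s -> orthc (Lin E) t <-> diffmx s *m t = 0.
Proof.
move=> sp; have [Es _] := sp; split => [tT | st0].
  apply/row_matrixP => i; rewrite row_mul rowK row0.
  apply/matrixP => a b; rewrite !ord1 [RHS]mxE.
  apply: (tT (s i - g)); exists (s i), g.
  by split; [exact: aff_singleton | split; [exact: aff_singleton|]].
move=> w [u [v [affu [affv ->]]]].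
have : ((u - v)^T <= diffmx s)%MS.
  have -> : u - v = (u - g) - (v - g) by rewrite opprB addrA subrK.
  by rewrite linearB addmx_sub ?eqmx_opp ?aff_sub_diffmx.
by case/submxP => z uvE; rewrite /dotv uvE -mulmxA st0 mulmx0 mxE.
Qed.

End AffineHull.

Lemma exists_kernel_orthc_Lin (R : realType) n (E : 'cV[R]_n -> Prop) (g : 'cV[R]_n) :
  E g -> exists k (B : 'M[R]_(k, n)),
    (forall t, orthc (Lin E) t <-> B *m t = 0) /\
    forall v, aff E v <-> ((v - g)^T <= B)%MS.
Proof.
move=> Eg; have [k [s sp]] := exists_spanning_diffs E g.
exists k, (diffmx g s); split=> [t|v]; first exact: orthc_Lin_diffmx.
by split; [exact: aff_sub_diffmx | exact: sub_diffmx_aff sp.1].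
Qed.

Section OrthoprojLin.
Variables (R : realType) (n : nat) (E : 'cV[R]_n -> Prop) (g : 'cV[R]_n).
Hypothesis Eg : E g.
Local Notation P := (orthoproj (orthc (Lin E))).

Lemma orthoproj_LinT : P^T = P.
Proof.
have [k [B [TE _]]] := exists_kernel_orthc_Lin Eg.
by rewrite (orthoproj_kerproj TE) kerprojT.
Qed.

Lemma orthoproj_Lin_idem : P *m P = P.
Proof.
have [k [B [TE _]]] := exists_kernel_orthc_Lin Eg.
by rewrite (orthoproj_kerproj TE) kerproj_idem.
Qed.

Lemma orthoproj_Lin_fixE t : orthc (Lin E) t <-> P *m t = t.
Proof.
have [k [B [TE _]]] := exists_kernel_orthc_Lin Eg; rewrite TE (orthoproj_kerproj TE).
by split=> [/kerproj_id // | <-]; rewrite mulmxA mulmx_kerproj mul0mx.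
Qed.

Lemma aff_orthoprojE v : aff E v <-> P *m v = P *m g.
Proof.
have [k [B [TE affE]]] := exists_kernel_orthc_Lin Eg.
rewrite affE (orthoproj_kerproj TE) -kerproj_eq0 mulmxBr.
by split=> [/eqP | ->]; [rewrite subr_eq0 => /eqP | rewrite subrr].
Qed.

End OrthoprojLin.

Lemma penrose_mul_proj (R : realType) p n (Phi : 'M[R]_(p, n)) (P : 'M[R]_n) X :
  P^T = P -> P *m P = P ->
  (forall z : 'cV[R]_n, P *m z = z -> Phi *m z = 0 -> z = 0) ->
  penrose (Phi *m P) X ->
  forall v : 'cV[R]_n, P *m v = v -> X *m (Phi *m P) *m v = v.
Proof.
move=> PT PP Phi_inj [MXM _ _ XMT] v Pv.
have PXM : P *m (X *m (Phi *m P)) = X *m (Phi *m P).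
  by rewrite -XMT !trmx_mul PT !mulmxA PP.
set M := Phi *m P in MXM PXM *; set z := v - X *m M *m v.
have Pz : P *m z = z by rewrite /z mulmxBr Pv mulmxA PXM.
have Mz : M *m z = 0 by rewrite /z mulmxBr mulmxA (mulmxA M X M) MXM subrr.
by apply/esym/subr0_eq/(Phi_inj _ Pz); rewrite -Pz mulmxA.
Qed.

Theorem proposition1 (R : realType) (N P : nat) (J : 'cV[R]_N -> R)
  (Phi : 'M[R]_(P, N)) (x0 : 'cV[R]_N) :
  convex_fun J ->
  (forall x : 'cV[R]_N, Tspace J x0 x -> Phi *m x = 0 -> x = 0) ->
  forall g : 'cV[R]_N, subdiff J x0 g ->
  etaF J Phi x0 =
    Phi^T *m (mp_pinv (Phi *m orthoproj (Tspace J x0)))^T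
      *m (orthoproj (Tspace J x0) *m g).
Proof.
move=> _ Phi_inj g Eg; rewrite /etaF /Tspace in Phi_inj *.
set Pr := orthoproj _; set X := mp_pinv _.
have PrT : Pr^T = Pr := orthoproj_LinT Eg.
have XP : penrose (Phi *m Pr) X := mp_pinvP _.
have constraintE q :
    aff (subdiff J x0) (Phi^T *m q) <-> (Phi *m Pr)^T *m q = Pr *m g.
  by rewrite aff_orthoprojE // trmx_mul PrT mulmxA.
have XMg : X *m (Phi *m Pr) *m (Pr *m g) = Pr *m g.
  apply: penrose_mul_proj PrT (orthoproj_Lin_idem Eg) _ XP _ _.
    by move=> z /(orthoproj_Lin_fixE Eg) /Phi_inj.
  by rewrite mulmxA (orthoproj_Lin_idem Eg).
have feasible : (Phi *m Pr)^T *m (X^T *m (Pr *m g)) = Pr *m g.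
  by have [_ _ _ XMT] := XP; rewrite mulmxA -trmx_mul XMT XMg.
rewrite (@argmin_normE _ _ _ (X^T *m (Pr *m g))); first exact: mulmxA.
  exact/constraintE.
by move=> q /constraintE; apply: penrose_min_norm (penrose_tr XP) feasible.
Qed.
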